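(* Let $P$ be a polyomino with consistent parity. Then $B(P,1)$ and $B(P,-1)$ both have consistent parity.
   Context: A cell is a unit square $[i,i+1]\times[j,j+1]$ with $i,j\in\mathbb{Z}$. A polyomino is a finite union of cells. A polyomino $P$ has consistent parity if all first coordinates of its corners have the same parity and all second coordinates of its corners have the same parity. Equivalently, there is an open $2\times 2$ square $S$ such that for all integers $i,j$, the translate $S'=S+(2i,2j)$ satisfies either $S'\subseteq P$ or $S'\cap P=\emptyset$. Distances are measured in the $L_\infty$-norm: $\mathrm{dist}(a,b)=\|a-b\|_\infty$, and $\mathrm{dist}(A,B)=\inf_{a\in A,b\in B}\mathrm{dist}(a,b)$. For $A\subseteq\mathbb{R}^2$ and $r\ge 0$, define $B(A,r)=\{x\in\mathbb{R}^2:\mathrm{dist}(x,A)\le r\}$. For $r<0$, define $B(A,r)=B(A^c,-r)^c$. *)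

From Stdlib Require Import Reals Lra ZArith List.
Open Scope R_scope.

Definition pt := (R * R)%type.
Definition region := pt -> Prop.

Definition cell (i j : Z) : region :=
  fun x => IZR i <= fst x <= IZR i + 1 /\ IZR j <= snd x <= IZR j + 1.

Definition is_polyomino (P : region) : Prop :=
  exists cs : list (Z * Z),
    forall x, P x <-> exists c, In c cs /\ cell (fst c) (snd c) x.

Definition dinf (a b : pt) : R :=
  Rmax (Rabs (fst a - fst b)) (Rabs (snd a - snd b)).

(* dist(x, A) <= r, i.e. inf_{a in A} dinf x a <= r (false when A is empty,
   since then the infimum is +infinity). *)
Definition dist_le (x : pt) (A : region) (r : R) : Prop :=
  forall e, 0 < e -> exists a, A a /\ dinf x a < r + e.

Definition compl (A : region) : region := fun x => ~ A x.

Definition Bnb (A : region) (r : R) : region :=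
  fun x => if Rle_dec 0 r then dist_le x A r else ~ dist_le x (compl A) (- r).

Definition open_sq2 (a b : R) : region :=
  fun x => a < fst x < a + 2 /\ b < snd x < b + 2.

Definition consistent_parity (A : region) : Prop :=
  exists a b : R, forall i j : Z,
    let S' := open_sq2 (a + 2 * IZR i) (b + 2 * IZR j) in
    (forall x, S' x -> A x) \/ (forall x, S' x -> ~ A x).

From Stdlib Require Import Reals Lra List Classical.
Open Scope R_scope.

(* Shift the 2x2 grid by (-1,-1): each new square is the unit L-infinity ball
   around a corner g of the old grid.  Such a square lies in B(A,1)
   as soon as one of the four old squares at g lies in A, and misses B(A,1)
   otherwise, because a point of A within distance 2 of g can be moved off the
   two grid lines through g, where it falls in one of those four squares.  A
   polyomino allows this move because its cells have interior, and so does its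
   complement because it is open; B(P,-1) is the complement of B(P^c,1). *)

Lemma Rabs_lt_iff u r : Rabs u < r <-> - r < u < r.
Proof.
  split.
  - intro H; destruct (Rabs_def2 _ _ H); lra.
  - intros [? ?]; apply Rabs_def1; lra.
Qed.

Lemma dinf_lt x y r :
  dinf x y < r <-> Rabs (fst x - fst y) < r /\ Rabs (snd x - snd y) < r.
Proof. apply Rmax_Rlt. Qed.

Lemma dinf_sym x y : dinf x y = dinf y x.
Proof. unfold dinf; rewrite (Rabs_minus_sym (fst x)), (Rabs_minus_sym (snd x)); reflexivity. Qed.

Lemma dinf_triangle x y z : dinf x z <= dinf x y + dinf y z.
Proof.
  assert (Hcoord : forall u v w, Rabs (u - w) <= Rabs (u - v) + Rabs (v - w)).
  { intros u v w; replace (u - w) with ((u - v) + (v - w)) by ring; apply Rabs_triang. }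
  unfold dinf; apply Rmax_lub; eapply Rle_trans; try apply Hcoord;
    apply Rplus_le_compat; (apply Rmax_l || apply Rmax_r).
Qed.

Lemma Bnb_nonneg A r x : 0 <= r -> Bnb A r x <-> dist_le x A r.
Proof. intro Hr; unfold Bnb; destruct (Rle_dec 0 r); [tauto | lra]. Qed.

Lemma Bnb_neg A r x : r < 0 -> Bnb A r x <-> ~ dist_le x (compl A) (- r).
Proof. intro Hr; unfold Bnb; destruct (Rle_dec 0 r); [lra | tauto]. Qed.

Lemma consistent_parity_ext (A B : region) :
  (forall x, A x <-> B x) -> consistent_parity A -> consistent_parity B.
Proof.
  intros HAB [a [b HA]]; exists a, b; intros i j.
  destruct (HA i j) as [Hin | Hout]; [left | right]; intros x Hx; rewrite <- HAB; auto.
Qed.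

Lemma consistent_parity_compl A : consistent_parity A -> consistent_parity (compl A).
Proof.
  intros [a [b HA]]; exists a, b; intros i j.
  destruct (HA i j) as [Hin | Hout]; [right | left]; intros x Hx; unfold compl; auto.
Qed.

Definition cross_avoidable (A : region) : Prop :=
  forall x g r, A x -> dinf x g < r ->
  exists y, A y /\ dinf y g < r /\ fst y <> fst g /\ snd y <> snd g.

Definition open_region (U : region) : Prop :=
  forall x, U x -> exists e, 0 < e /\ forall y, dinf x y < e -> U y.

Lemma overlapping_intervals_avoid l1 h1 l2 h2 c :
  l1 < h1 -> l1 < h2 -> l2 < h1 -> l2 < h2 ->
  exists y, l1 < y < h1 /\ l2 < y < h2 /\ y <> c.
Proof.
  intros.
  set (lo := Rmax l1 l2); set (hi := Rmin h1 h2).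
  assert (lo < hi) by (unfold lo, hi, Rmax, Rmin; repeat destruct Rle_dec; lra).
  assert (l1 <= lo /\ l2 <= lo) by (split; [apply Rmax_l | apply Rmax_r]).
  assert (hi <= h1 /\ hi <= h2) by (split; [apply Rmin_l | apply Rmin_r]).
  destruct (Req_dec ((lo + hi) / 2) c).
  - exists ((3 * lo + hi) / 4); repeat split; lra.
  - exists ((lo + hi) / 2); repeat split; lra.
Qed.

Lemma cell_cross_avoidable i j : cross_avoidable (cell i j).
Proof.
  intros x g r [Hx1 Hx2] Hxg; apply dinf_lt in Hxg as [Hg1 Hg2].
  apply Rabs_lt_iff in Hg1; apply Rabs_lt_iff in Hg2.
  destruct (overlapping_intervals_avoid (IZR i) (IZR i + 1) (fst g - r) (fst g + r) (fst g))
    as [y1 [? [? ?]]]; try lra.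
  destruct (overlapping_intervals_avoid (IZR j) (IZR j + 1) (snd g - r) (snd g + r) (snd g))
    as [y2 [? [? ?]]]; try lra.
  exists (y1, y2); repeat split; simpl; try lra; auto.
  apply dinf_lt; simpl; split; apply Rabs_lt_iff; lra.
Qed.

Lemma polyomino_cross_avoidable P : is_polyomino P -> cross_avoidable P.
Proof.
  intros [cs Hcs] x g r Hx Hxg.
  destruct (proj1 (Hcs x) Hx) as [c [Hc Hxc]].
  destruct (cell_cross_avoidable _ _ x g r Hxc Hxg) as [y [Hyc Hy]].
  exists y; split; [apply Hcs; exists c; auto | exact Hy].
Qed.

Lemma open_cross_avoidable U : open_region U -> cross_avoidable U.
Proof.
  intros HU x g r Hx Hxg.
  destruct (HU x Hx) as [e [He Hball]].
  apply dinf_lt in Hxg as [Hg1 Hg2].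
  apply Rabs_lt_iff in Hg1; apply Rabs_lt_iff in Hg2.
  destruct (overlapping_intervals_avoid (fst x - e) (fst x + e) (fst g - r) (fst g + r) (fst g))
    as [y1 [? [? ?]]]; try lra.
  destruct (overlapping_intervals_avoid (snd x - e) (snd x + e) (snd g - r) (snd g + r) (snd g))
    as [y2 [? [? ?]]]; try lra.
  exists (y1, y2); repeat split; auto.
  - apply Hball, dinf_lt; simpl; split; apply Rabs_lt_iff; lra.
  - apply dinf_lt; simpl; split; apply Rabs_lt_iff; lra.
Qed.

Lemma open_region_ext (U V : region) :
  (forall x, U x <-> V x) -> open_region U -> open_region V.
Proof.
  intros HUV HU x Hx.
  destruct (HU x (proj2 (HUV x) Hx)) as [e [He Hball]].
  exists e; split; [exact He | intros y Hy; apply HUV, Hball, Hy].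
Qed.

Lemma open_region_and U V :
  open_region U -> open_region V -> open_region (fun x => U x /\ V x).
Proof.
  intros HU HV x [Ux Vx].
  destruct (HU x Ux) as [e1 [He1 H1]]; destruct (HV x Vx) as [e2 [He2 H2]].
  exists (Rmin e1 e2); split; [apply Rmin_glb_lt; lra |].
  intros y Hy; split;
    [apply H1; eapply Rlt_le_trans; [exact Hy | apply Rmin_l]
    |apply H2; eapply Rlt_le_trans; [exact Hy | apply Rmin_r]].
Qed.

Lemma interval_compl_open lo p :
  ~ (lo <= p <= lo + 1) ->
  exists e, 0 < e /\ forall y, Rabs (p - y) < e -> ~ (lo <= y <= lo + 1).
Proof.
  intro Hp; destruct (Rlt_le_dec p lo).
  - exists (lo - p); split; [lra |]; intros y Hy; apply Rabs_lt_iff in Hy; lra.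
  - exists (p - lo - 1); split; [lra |]; intros y Hy; apply Rabs_lt_iff in Hy; lra.
Qed.

Lemma cell_compl_open i j : open_region (compl (cell i j)).
Proof.
  intros x Hx; unfold compl, cell in Hx; apply not_and_or in Hx as [Hx | Hx].
  - destruct (interval_compl_open _ _ Hx) as [e [He Hball]].
    exists e; split; [exact He |]; intros y Hy [Hy1 _].
    apply dinf_lt in Hy as [Hxy _]; exact (Hball _ Hxy Hy1).
  - destruct (interval_compl_open _ _ Hx) as [e [He Hball]].
    exists e; split; [exact He |]; intros y Hy [_ Hy2].
    apply dinf_lt in Hy as [_ Hxy]; exact (Hball _ Hxy Hy2).
Qed.

Lemma polyomino_compl_open P : is_polyomino P -> open_region (compl P).
Proof.
  intros [cs Hcs].
  apply (open_region_ext (fun x => ~ exists c, In c cs /\ cell (fst c) (snd c) x)).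
  { intro x; unfold compl; rewrite Hcs; tauto. }
  clear Hcs; induction cs as [| c cs IH].
  - intros x _; exists 1; split; [lra |]; intros y _ [c [[] _]].
  - apply (open_region_ext (fun x => compl (cell (fst c) (snd c)) x /\
                                     ~ exists c', In c' cs /\ cell (fst c') (snd c') x)).
    + intro x; unfold compl; simpl; split.
      * intros [Hc Hcs'] [c' [[<- | Hin] Hx]]; eauto.
      * intro H; split; [intro Hx | intros [c' [Hin Hx]]]; eauto.
    + apply open_region_and; [apply cell_compl_open | exact IH].
Qed.

Definition adjacent (k i : Z) : Prop := i = (k - 1)%Z \/ i = k.

Definition corner (a b : R) (k l : Z) : pt := (a + 2 * IZR k, b + 2 * IZR l).

Definition grid_square (a b : R) (i j : Z) : region :=
  open_sq2 (a + 2 * IZR i) (b + 2 * IZR j).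

Lemma adjacent_interval_off_corner a k y :
  Rabs (y - (a + 2 * IZR k)) < 2 -> y <> a + 2 * IZR k ->
  exists i, adjacent k i /\ a + 2 * IZR i < y < a + 2 * IZR i + 2.
Proof.
  intros Hy Hne; apply Rabs_lt_iff in Hy.
  destruct (Rtotal_order y (a + 2 * IZR k)) as [Hlt | [Heq | Hgt]]; [| contradiction |].
  - exists (k - 1)%Z; split; [left; reflexivity | rewrite minus_IZR; lra].
  - exists k; split; [right; reflexivity | lra].
Qed.

Lemma near_adjacent_interval a k i x e :
  adjacent k i -> Rabs (x - (a + 2 * IZR k)) < 1 -> 0 < e ->
  exists y, a + 2 * IZR i < y < a + 2 * IZR i + 2 /\ Rabs (x - y) < 1 + e.
Proof.
  intros Hi Hx He; apply Rabs_lt_iff in Hx.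
  set (t := Rmin e 1 / 2).
  assert (0 < t /\ t <= e /\ t < 1) as Ht.
  { assert (Rmin e 1 <= e) by apply Rmin_l; assert (Rmin e 1 <= 1) by apply Rmin_r.
    assert (0 < Rmin e 1) by (apply Rmin_glb_lt; lra); unfold t; lra. }
  destruct Hi as [-> | ->]; rewrite ?minus_IZR.
  - exists (a + 2 * IZR k - t); split; [| apply Rabs_lt_iff]; lra.
  - exists (a + 2 * IZR k + t); split; [| apply Rabs_lt_iff]; lra.
Qed.

Lemma grid_square_off_cross a b k l y :
  dinf y (corner a b k l) < 2 ->
  fst y <> fst (corner a b k l) -> snd y <> snd (corner a b k l) ->
  exists i j, adjacent k i /\ adjacent l j /\ grid_square a b i j y.
Proof.
  intros Hy H1 H2; apply dinf_lt in Hy as [Hy1 Hy2].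
  destruct (adjacent_interval_off_corner _ _ _ Hy1 H1) as [i [Hi Hyi]].
  destruct (adjacent_interval_off_corner _ _ _ Hy2 H2) as [j [Hj Hyj]].
  exists i, j; repeat split; auto; apply Hyi || apply Hyj.
Qed.

Lemma near_adjacent_grid_square a b k l i j x e :
  adjacent k i -> adjacent l j -> dinf x (corner a b k l) < 1 -> 0 < e ->
  exists y, grid_square a b i j y /\ dinf x y < 1 + e.
Proof.
  intros Hi Hj Hx He; apply dinf_lt in Hx as [Hx1 Hx2].
  destruct (near_adjacent_interval _ _ _ _ _ Hi Hx1 He) as [y1 [Hy1 Hxy1]].
  destruct (near_adjacent_interval _ _ _ _ _ Hj Hx2 He) as [y2 [Hy2 Hxy2]].
  exists (y1, y2); split; [split; assumption | apply dinf_lt; split; assumption].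
Qed.

Lemma shifted_square_near_corner a b k l x :
  open_sq2 (a - 1 + 2 * IZR k) (b - 1 + 2 * IZR l) x -> dinf x (corner a b k l) < 1.
Proof. intros [H1 H2]; apply dinf_lt; simpl; split; apply Rabs_lt_iff; lra. Qed.

Lemma consistent_parity_Bnb1 A :
  cross_avoidable A -> consistent_parity A -> consistent_parity (Bnb A 1).
Proof.
  intros Hav [a [b Hsq]]; exists (a - 1), (b - 1); intros k l; cbv zeta.
  destruct (classic (exists i j, adjacent k i /\ adjacent l j /\
                                 forall y, grid_square a b i j y -> A y))
    as [[i [j [Hi [Hj Hin]]]] | Hnone].
  - left; intros x Hx; apply Bnb_nonneg; [lra |]; intros e He.
    destruct (near_adjacent_grid_square a b k l i j x e Hi Hj
                (shifted_square_near_corner _ _ _ _ _ Hx) He) as [y [Hy Hxy]].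
    exists y; auto.
  - right; intros x Hx Hd; apply Bnb_nonneg in Hd; [| lra].
    set (g := corner a b k l).
    assert (Hxg : dinf x g < 1) by apply (shifted_square_near_corner _ _ _ _ _ Hx).
    destruct (Hd (1 - dinf x g)) as [p [Hp Hxp]]; [lra |].
    assert (Hpg : dinf p g < 2).
    { pose proof (dinf_triangle p x g); rewrite (dinf_sym p x) in *; lra. }
    destruct (Hav p g 2 Hp Hpg) as [y [Hy [Hyg [H1 H2]]]].
    destruct (grid_square_off_cross a b k l y Hyg H1 H2) as [i [j [Hi [Hj Hs]]]].
    destruct (Hsq i j) as [Hin | Hout].
    + apply Hnone; exists i, j; auto.
    + exact (Hout y Hs Hy).
Qed.

Theorem lemma3 (P : region) :
  is_polyomino P -> consistent_parity P ->
  consistent_parity (Bnb P 1) /\ consistent_parity (Bnb P (-1)).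
Proof.
  intros Hpoly Hpar; split.
  - exact (consistent_parity_Bnb1 P (polyomino_cross_avoidable P Hpoly) Hpar).
  - apply (consistent_parity_ext (compl (Bnb (compl P) 1))).
    { intro x; unfold compl; rewrite (Bnb_neg P), (Bnb_nonneg (compl P)) by lra.
      replace (- -1) with 1 by lra; tauto. }
    apply consistent_parity_compl, consistent_parity_Bnb1.
    + exact (open_cross_avoidable _ (polyomino_compl_open P Hpoly)).
    + exact (consistent_parity_compl P Hpar).
Qed.
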